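(* Let $A\in\mathbb R^{n\times n}$ be symmetric with $A\not\succeq0$, $a,x_0,b_1,\ldots,b_p\in\mathbb R^n$, $u,\beta_1,\ldots,\beta_p\in\mathbb R$. Consider \[ ({\rm ETRS})\quad \min_{x\in\mathbb R^n}\ x^TAx+a^Tx\quad\text{s.t.}\quad \|x-x_0\|^2\le u,\quad b_i^Tx\le\beta_i,\ i=1,\ldots,p. \] Suppose \[ \dim\Big({\rm span}\big(\{b_1,\ldots,b_p\}\cup\mathcal R(A-\lambda_{\min}(A)I_n)\big)\Big)\le n-1. \] Then (ETRS) is equivalent to (in particular has the same optimal value as) the convex problem \[ \min_{x}\ x^T(A-\lambda_{\min}(A)I_n)x+a^Tx+\lambda_{\min}(A)(u+2x^Tx_0-\|x_0\|^2)\quad\text{s.t.}\quad \|x-x_0\|^2\le u,\quad b_i^Tx\le\beta_i,\ i=1,\ldots,p. \]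
   Context: $\lambda_{\min}(A)$ is the smallest eigenvalue of $A$; $\mathcal R(\cdot)$ denotes the range of a matrix; $I_n$ is the identity; $\|\cdot\|$ is the Euclidean norm. *)

From HB Require Import structures.
From mathcomp Require Import all_boot all_order all_algebra.
From mathcomp Require Export reals.
Set Implicit Arguments. Unset Strict Implicit. Unset Printing Implicit Defensive.
Import Order.TTheory GRing.Theory Num.Theory.
Local Open Scope ring_scope.

Definition qform (R : realType) (n : nat) (A : 'M[R]_n) (x : 'cV[R]_n) : R :=
  (x^T *m A *m x) 0 0.
Definition dotv (R : realType) (n : nat) (a x : 'cV[R]_n) : R := (a^T *m x) 0 0.
Definition sqnorm (R : realType) (n : nat) (x : 'cV[R]_n) : R := dotv x x.

Definition psd (R : realType) (n : nat) (A : 'M[R]_n) : Prop :=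
  forall x : 'cV[R]_n, 0 <= qform A x.

Definition is_lambda_min (R : realType) (n : nat) (A : 'M[R]_n) (lam : R) : Prop :=
  eigenvalue A lam /\ (forall mu : R, eigenvalue A mu -> lam <= mu).

Definition feasible (R : realType) (n p : nat) (x0 : 'cV[R]_n) (u : R)
  (b : 'I_p -> 'cV[R]_n) (beta : 'I_p -> R) (x : 'cV[R]_n) : Prop :=
  sqnorm (x - x0) <= u /\ (forall i, dotv (b i) x <= beta i).

Definition is_opt_value (R : realType) (n : nat) (F : 'cV[R]_n -> Prop)
  (f : 'cV[R]_n -> R) (v : R) : Prop :=
  (exists2 x, F x & f x = v) /\ (forall y, F y -> v <= f y).

Definition rows_of (R : realType) (n p : nat) (b : 'I_p -> 'cV[R]_n) : 'M[R]_(p, n) :=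
  \matrix_(i < p, j < n) b i j 0.

(* Since A is not positive semidefinite, lam = lambda_min(A) < 0: the minimum
   of the Rayleigh quotient over the (compact) unit sphere is an eigenvalue.
   The convex objective differs from the original one by
   lam (||x - x0||^2 - u), so it is a minorant of it on the feasible set, with
   equality on the sphere ||x - x0||^2 = u.  The dimension hypothesis provides
   d <> 0 orthogonal to every b_i with (A - lam I) d = 0; along x + t d the
   linear constraints do not move and the convex objective is affine in t, so
   any feasible point can be pushed to the sphere, in the direction where the
   convex objective does not increase. *)

From HB Require Import structures.
From mathcomp Require Import all_boot all_order all_algebra.
From mathcomp Require Import reals.
From mathcomp Require Import boolp classical_sets topology normedtype derive.
From mathcomp Require Import ring lra.
Set Implicit Arguments. Unset Strict Implicit. Unset Printing Implicit Defensive.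
Import Order.TTheory GRing.Theory Num.Theory.
Import numFieldTopology.Exports.
Local Open Scope ring_scope.
Local Open Scope classical_set_scope.

Section QuadraticForms.
Variables (R : realType) (n : nat).
Implicit Types (M : 'M[R]_n) (x y z : 'cV[R]_n).

Lemma dotvDl x y z : dotv (x + y) z = dotv x z + dotv y z.
Proof. by rewrite /dotv linearD /= mulmxDl mxE. Qed.

Lemma dotvDr x y z : dotv x (y + z) = dotv x y + dotv x z.
Proof. by rewrite /dotv mulmxDr mxE. Qed.

Lemma dotvZl k x y : dotv (k *: x) y = k * dotv x y.
Proof. by rewrite /dotv linearZ /= -scalemxAl mxE. Qed.

Lemma dotvZr k x y : dotv x (k *: y) = k * dotv x y.
Proof. by rewrite /dotv -scalemxAr mxE. Qed.

Lemma dotvNl x y : dotv (- x) y = - dotv x y.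
Proof. by rewrite -scaleN1r dotvZl mulN1r. Qed.

Lemma dotvNr x y : dotv x (- y) = - dotv x y.
Proof. by rewrite -scaleN1r dotvZr mulN1r. Qed.

Lemma dotvC x y : dotv x y = dotv y x.
Proof.
have -> : dotv x y = (x^T *m y)^T 0 0 by rewrite mxE.
by rewrite trmx_mul trmxK.
Qed.

Lemma dotv_mulmxr M x y : dotv x (M *m y) = dotv (M^T *m x) y.
Proof. by rewrite /dotv trmx_mul trmxK mulmxA. Qed.

Lemma dotv0l x : dotv 0 x = 0.
Proof. by rewrite /dotv trmx0 mul0mx mxE. Qed.

Lemma dotv0r x : dotv x 0 = 0.
Proof. by rewrite /dotv mulmx0 mxE. Qed.

Lemma qformE M x : qform M x = dotv x (M *m x).
Proof. by rewrite /qform /dotv mulmxA. Qed.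

Lemma sqnorm_qform1 x : sqnorm x = qform 1%:M x.
Proof. by rewrite qformE mul1mx. Qed.

Lemma qformZ M k x : qform M (k *: x) = k ^+ 2 * qform M x.
Proof. by rewrite !qformE -scalemxAr dotvZl dotvZr mulrA expr2. Qed.

Lemma qform_subscalar M m x : qform (M - m%:M) x = qform M x - m * sqnorm x.
Proof. by rewrite !qformE mulmxBl mul_scalar_mx dotvDr dotvNr dotvZr. Qed.

Lemma qform_addZ M x y t : M^T = M ->
  qform M (x + t *: y) = qform M x + 2 * t * dotv y (M *m x) + t ^+ 2 * qform M y.
Proof.
move=> sM; rewrite -qformZ !qformE mulmxDr !(dotvDl, dotvDr).
rewrite -scalemxAr !(dotvZl, dotvZr) (dotv_mulmxr M x y) sM (dotvC (M *m x)).
ring.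
Qed.

Lemma sqnorm_addZ x y t :
  sqnorm (x + t *: y) = sqnorm x + 2 * t * dotv y x + t ^+ 2 * sqnorm y.
Proof. by rewrite !sqnorm_qform1 qform_addZ ?trmx1 // mul1mx. Qed.

Lemma sqnormE x : sqnorm x = \sum_i x i 0 ^+ 2.
Proof. by rewrite /sqnorm /dotv mxE; apply: eq_bigr => i _; rewrite mxE expr2. Qed.

Lemma sqnorm_ge0 x : 0 <= sqnorm x.
Proof. by rewrite sqnormE sumr_ge0 // => i _; exact: sqr_ge0. Qed.

Lemma sqnorm_eq0 x : (sqnorm x == 0) = (x == 0).
Proof.
apply/idP/eqP => [|->]; last by rewrite /sqnorm dotv0r.
rewrite sqnormE psumr_eq0 => [/allP x0|i _]; last exact: sqr_ge0.
apply/colP => i; rewrite mxE; apply/eqP; rewrite -sqrf_eq0.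
exact: (implyP (x0 i (mem_index_enum i))).
Qed.

Lemma sqnorm_gt0 x : (0 < sqnorm x) = (x != 0).
Proof. by rewrite lt_def sqnorm_ge0 sqnorm_eq0 andbT. Qed.

Lemma sqnorm_normalize x : x != 0 -> exists k, k ^+ 2 * sqnorm x = 1.
Proof.
rewrite -sqnorm_gt0 => x0; exists (Num.sqrt (sqnorm x))^-1.
by rewrite exprVn sqr_sqrtr ?ltW // mulVf // gt_eqF.
Qed.

Lemma ge0_linear_quadratic_eq0 (s k : R) :
  0 <= k -> (forall t, 0 <= t * s + t ^+ 2 * k) -> s = 0.
Proof.
move=> k0 /(_ (- s / (k + 1))).
have k1 : k + 1 != 0 by rewrite gt_eqF // ltr_wpDl.
have -> : - s / (k + 1) * s + (- s / (k + 1)) ^+ 2 * k = - (s / (k + 1)) ^+ 2.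
  by field.
rewrite oppr_ge0 => sq_le0; have : (s / (k + 1)) ^+ 2 == 0.
  by rewrite eq_le sq_le0 sqr_ge0.
by rewrite sqrf_eq0 mulf_eq0 invr_eq0 (negbTE k1) orbF => /eqP.
Qed.

End QuadraticForms.

Section SymmetricMatrices.
Variables (R : realType) (n : nat).
Implicit Types (M : 'M[R]_n) (x : 'cV[R]_n).

Lemma sym_subscalar M m : M^T = M -> (M - m%:M)^T = M - m%:M.
Proof. by move=> sM; rewrite linearB /= tr_scalar_mx sM. Qed.

Lemma psd_qform_eq0 M x : M^T = M -> psd M -> qform M x = 0 -> M *m x = 0.
Proof.
move=> sM psdM Mx0; apply/eqP; rewrite -sqnorm_eq0.
suff /eqP : 2 * sqnorm (M *m x) = 0 by rewrite mulf_eq0 pnatr_eq0.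
apply: (ge0_linear_quadratic_eq0 (psdM (M *m x))) => t.
by have := psdM (x + t *: (M *m x)); rewrite qform_addZ // Mx0 add0r mulrCA mulrA.
Qed.

Lemma qform_trmx_continuous M : continuous (fun v : 'rV[R]_n => qform M v^T).
Proof.
have -> : (fun v : 'rV[R]_n => qform M v^T) =
          (fun v => \sum_i v 0 i * \sum_j M i j * v 0 j).
  apply: funext => v; rewrite qformE /dotv trmxK mxE.
  by apply: eq_bigr => i _; rewrite !mxE; under eq_bigr do rewrite mxE.
apply: continuous_big => [|i _ v]; first exact: (@add_continuous R^o).
apply: continuousM; first exact: coord_continuous.
apply: continuous_big => [|j _ w]; first exact: (@add_continuous R^o).
by apply: continuousM; [exact: cst_continuous | exact: coord_continuous].
Qed.

Lemma sym_eigenvalue_rayleigh M : M^T = M -> (0 < n)%N ->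
  exists2 m, eigenvalue M m & forall x, m * sqnorm x <= qform M x.
Proof.
move=> sM n_gt0.
pose sphere := [set v : 'rV[R]_n | qform 1%:M v^T = 1].
have [k k1] : exists k, k ^+ 2 * sqnorm (const_mx 1 : 'cV[R]_n) = 1.
  apply: sqnorm_normalize; apply/eqP => /colP /(_ (Ordinal n_gt0)) /eqP.
  by rewrite !mxE oner_eq0.
have sphere_nonempty : sphere !=set0.
  by exists (k *: const_mx 1)^T; rewrite /sphere /= trmxK qformZ -sqnorm_qform1.
have sphere_compact : compact sphere.
  have cube_compact :
      compact [set v : 'rV[R]_n | forall i, `[(-1 : R), 1]%classic (v ord0 i)].
    apply: (@rV_compact _ _ (fun=> `[(-1 : R), 1]%classic)) => _.
    exact: segment_compact.
  apply: subclosed_compact cube_compact _.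
    apply: (@preimage_closed _ _ (fun v : 'rV[R]_n => qform 1%:M v^T) [set y | y = 1]);
      last exact: closed_eq.
    by move=> v _; exact: qform_trmx_continuous.
  move=> v; rewrite /sphere /= -sqnorm_qform1 sqnormE => v1 i; rewrite in_itv /=.
  have : v ord0 i ^+ 2 <= 1.
    by rewrite -v1 (bigD1 i) //= mxE lerDl sumr_ge0 // => j _; exact: sqr_ge0.
  by move=> vi1; apply/andP; split; nra.
have [c c_sphere c_min] := EVT_min_rV sphere_nonempty sphere_compact
  (continuous_subspaceT (qform_trmx_continuous (M := M))).
move: c_sphere; rewrite inE /sphere /= -sqnorm_qform1 => c1.
have rayleigh x : qform M c^T * sqnorm x <= qform M x.
  have [->|x0] := eqVneq x 0.
    by rewrite /sqnorm !qformE mulmx0 !dotv0r mulr0.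
  have [k' k'1] := sqnorm_normalize x0.
  have := c_min (k' *: x)^T; rewrite !inE /sphere /= !trmxK !qformZ -sqnorm_qform1.
  move=> /(_ k'1) /(ler_wpM2r (sqnorm_ge0 x)).
  by rewrite mulrAC k'1 mul1r.
exists (qform M c^T) => //.
have Mc : (M - (qform M c^T)%:M) *m c^T = 0.
  apply: psd_qform_eq0; first exact: sym_subscalar.
    by move=> x; rewrite qform_subscalar subr_ge0.
  by rewrite qform_subscalar c1 mulr1 subrr.
apply/eigenvalueP; exists c.
  apply: trmx_inj; move/eqP: Mc; rewrite mulmxBl mul_scalar_mx subr_eq0 => /eqP.
  by rewrite trmx_mul sM linearZ.
apply: contraPneq c1 => ->.
by rewrite trmx0 /sqnorm dotv0r => /esym/eqP; rewrite oner_eq0.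
Qed.

End SymmetricMatrices.

Lemma eigenvalue_dim_gt0 (F : fieldType) n (M : 'M[F]_n) m :
  eigenvalue M m -> (0 < n)%N.
Proof. by case: n M => // M /eigenvalueP [v _]; rewrite (thinmx0 v) eqxx. Qed.

Lemma lambda_min_lt0 (R : realType) n (A : 'M[R]_n) lam :
  A^T = A -> ~ psd A -> is_lambda_min A lam -> lam < 0.
Proof.
move=> sA /existsNP [x /negP]; rewrite -ltNge.
case: n A x sA => [|n] A x sA; first by rewrite (flatmx0 x) qformE mulmx0 dotv0r ltxx.
move=> Ax_lt0 [_ lam_min].
have [m m_eig m_le] := sym_eigenvalue_rayleigh sA (ltn0Sn n).
apply: le_lt_trans (lam_min m m_eig) _.
by have := le_lt_trans (m_le x) Ax_lt0; have := sqnorm_ge0 x; nra.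
Qed.

Lemma mxrank_lt_ker (F : fieldType) m n (K : 'M[F]_(m, n)) :
  (\rank K < n)%N -> exists2 d : 'cV[F]_n, d != 0 & K *m d = 0.
Proof.
move=> rankK; have : kermx K^T != 0.
  by rewrite -mxrank_eq0 mxrank_ker mxrank_tr subn_eq0 -ltnNge.
case/rowV0Pn => w /sub_kermxP wK w0; exists w^T.
  by apply: contra w0 => /eqP w0; rewrite -[w]trmxK w0 trmx0.
by rewrite -[K]trmxK -trmx_mul wK trmx0.
Qed.

Lemma rows_of_mulmx (R : realType) n p (b : 'I_p -> 'cV[R]_n) d i :
  (rows_of b *m d) i 0 = dotv (b i) d.
Proof. by rewrite /dotv !mxE; apply: eq_bigr => j _; rewrite !mxE. Qed.

Lemma quadratic_root_sign (R : rcfType) (al be ga c : R) : 0 < al -> ga <= 0 ->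
  exists t, al * t ^+ 2 + 2 * be * t + ga = 0 /\ t * c <= 0.
Proof.
move=> al_gt0 ga_le0.
pose r := Num.sqrt (be ^+ 2 - al * ga).
have r2 : r ^+ 2 = be ^+ 2 - al * ga by rewrite sqr_sqrtr //; nra.
have r_ge0 : 0 <= r := sqrtr_ge0 _.
have root_eq e : al * ((- be + e * r) / al) ^+ 2 + 2 * be * ((- be + e * r) / al) + ga
              = (e ^+ 2 - 1) * r ^+ 2 / al.
  have gaE : ga = (be ^+ 2 - r ^+ 2) / al by rewrite r2; field; rewrite gt_eqF.
  by rewrite gaE; field; rewrite gt_eqF.
have [c_ge0|c_lt0] := lerP 0 c.
  exists ((- be + -1 * r) / al).
  split; first by rewrite root_eq sqrrN expr1n subrr !mul0r.
  rewrite mulN1r; apply: mulr_le0_ge0 => //; rewrite pmulr_lle0 ?invr_gt0 //; nra.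
exists ((- be + 1 * r) / al); split; first by rewrite root_eq expr1n subrr !mul0r.
rewrite mul1r; apply: mulr_ge0_le0; [rewrite pmulr_lge0 ?invr_gt0 //; nra | exact: ltW].
Qed.

Lemma is_opt_value_tight_minorant (R : realType) n (F : 'cV[R]_n -> Prop)
    (f g : 'cV[R]_n -> R) :
  (forall y, F y -> g y <= f y) ->
  (forall y, F y -> exists2 z, F z & f z = g z /\ g z <= g y) ->
  forall v, is_opt_value F f v <-> is_opt_value F g v.
Proof.
move=> g_le_f touch v; split=> [[[y Fy <-] f_min]|[[y Fy <-] g_min]]; split.
- have [z Fz [fz gz]] := touch y Fy.
  exists z => //; apply/eqP; rewrite eq_le (le_trans gz (g_le_f y Fy)) -fz f_min //.
- by move=> y' /[dup] /touch [z Fz [<- gz]] _; exact: le_trans (f_min z Fz) gz.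
- have [z Fz [fz gz]] := touch y Fy.
  by exists z => //; apply/eqP; rewrite fz eq_le gz g_min.
- by move=> y' Fy'; exact: le_trans (g_min y' Fy') (g_le_f y' Fy').
Qed.

Section ETRS.
Variables (R : realType) (n p : nat) (A : 'M[R]_n) (lam : R) (a x0 : 'cV[R]_n).
Variables (b : 'I_p -> 'cV[R]_n) (u : R) (beta : 'I_p -> R).
Hypothesis sA : A^T = A.

Definition etrs_obj x := qform A x + dotv a x.

Definition cvx_obj x :=
  qform (A - lam%:M) x + dotv a x + lam * (u + 2 * dotv x x0 - sqnorm x0).

Lemma etrs_obj_sub_cvx_obj x :
  etrs_obj x - cvx_obj x = lam * (sqnorm (x - x0) - u).
Proof.
rewrite /etrs_obj /cvx_obj qform_subscalar /sqnorm.
by rewrite !(dotvDl, dotvDr, dotvNl, dotvNr) (dotvC x0 x); ring.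
Qed.

Lemma cvx_obj_le_etrs_obj x :
  lam <= 0 -> feasible x0 u b beta x -> cvx_obj x <= etrs_obj x.
Proof.
move=> lam_le0 [x_ball _].
by rewrite -subr_ge0 etrs_obj_sub_cvx_obj mulr_le0 // subr_le0.
Qed.

Lemma cvx_obj_shift x (d : 'cV[R]_n) t : (A - lam%:M) *m d = 0 ->
  cvx_obj (x + t *: d) = cvx_obj x + t * (dotv a d + 2 * lam * dotv d x0).
Proof.
move=> Bd; rewrite /cvx_obj qform_addZ ?sym_subscalar //.
rewrite dotv_mulmxr sym_subscalar // Bd [qform _ d]qformE Bd dotv0l dotv0r.
by rewrite !(dotvDl, dotvDr, dotvZl, dotvZr) (dotvC d x0); ring.
Qed.

Lemma cvx_obj_touches_etrs_obj (d : 'cV[R]_n) :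
  d != 0 -> (forall i, dotv (b i) d = 0) -> (A - lam%:M) *m d = 0 ->
  forall y, feasible x0 u b beta y -> exists2 z, feasible x0 u b beta z &
    etrs_obj z = cvx_obj z /\ cvx_obj z <= cvx_obj y.
Proof.
move=> d_neq0 bd Bd y [y_ball y_b].
have d_pos : 0 < sqnorm d by rewrite sqnorm_gt0.
have y_in : sqnorm (y - x0) - u <= 0 by rewrite subr_le0.
have [t [t_root t_sign]] := quadratic_root_sign (dotv d (y - x0))
  (dotv a d + 2 * lam * dotv d x0) d_pos y_in.
have z_sphere : sqnorm (y + t *: d - x0) = u.
  by rewrite addrAC sqnorm_addZ; lra.
exists (y + t *: d).
  by split=> [|i]; rewrite ?z_sphere // dotvDr dotvZr bd mulr0 addr0.
split; first by apply/eqP; rewrite -subr_eq0 etrs_obj_sub_cvx_obj z_sphere subrr mulr0.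
by rewrite cvx_obj_shift // gerDl.
Qed.

End ETRS.

Theorem corollary2 (R : realType) (n p : nat) (A : 'M[R]_n) (lam : R)
  (a x0 : 'cV[R]_n) (b : 'I_p -> 'cV[R]_n) (u : R) (beta : 'I_p -> R) :
  A^T = A ->
  ~ psd A ->
  is_lambda_min A lam ->
  (* dim span({b_1..b_p} ∪ R(A - lam I)) <= n - 1; R(M) = row space of M^T *)
  (\rank (col_mx (rows_of b) (A - lam%:M)^T) <= n.-1)%N ->
  forall v : R,
    is_opt_value (feasible x0 u b beta) (fun x => qform A x + dotv a x) v <->
    is_opt_value (feasible x0 u b beta)
      (fun x => qform (A - lam%:M) x + dotv a x
                + lam * (u + 2 * dotv x x0 - sqnorm x0)) v.
Proof.
move=> sA not_psd lam_min rank_le.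
have lam_lt0 := lambda_min_lt0 sA not_psd lam_min.
have n_gt0 := eigenvalue_dim_gt0 lam_min.1.
have [d d_neq0] :
    exists2 d : 'cV[R]_n, d != 0 & col_mx (rows_of b) (A - lam%:M)^T *m d = 0.
  by apply: mxrank_lt_ker; apply: leq_ltn_trans rank_le _; rewrite ltn_predL.
rewrite mul_col_mx sym_subscalar // => /eqP; rewrite col_mx_eq0 => /andP[/eqP bd /eqP Bd].
have bd_i i : dotv (b i) d = 0 by rewrite -rows_of_mulmx bd mxE.
have cvx_le y : feasible x0 u b beta y -> cvx_obj A lam a x0 u y <= etrs_obj A a y.
  exact: cvx_obj_le_etrs_obj (ltW lam_lt0).
exact: is_opt_value_tight_minorant cvx_le (cvx_obj_touches_etrs_obj a sA d_neq0 bd_i Bd).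
Qed.
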